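(* Let $X$ be a finite connected poset and $\theta\in\mathcal{M}(X)$. Assume there exist maximal chains $C,D$ of $X$ such that $\theta$ is increasing on $C$ and decreasing on $D$. If $x\in C\cap D$, then $x\in\mathrm{Min}(X)$ or $x\in\mathrm{Max}(X)$.
   Context: $\mathrm{Min}(X)$, $\mathrm{Max}(X)$: minimal and maximal elements. For $x<y$, $e_{xy}$ denotes the incidence-algebra basis element and $B=\{e_{xy}:x<y\}$. For a bijection $\theta:B\to B$ and a maximal chain $C:u_1<\dots<u_m$, $\theta$ is increasing on $C$ if there is a maximal chain $D:v_1<\dots<v_m$ with $\theta(e_{u_iu_j})=e_{v_iv_j}$ for all $i<j$, decreasing if $\theta(e_{u_iu_j})=e_{v_{m-j+1}v_{m-i+1}}$ for all $i<j$. $\mathcal{M}(X)$ is the set of bijections $B\to B$ increasing or decreasing on every maximal chain. *)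

From HB Require Import structures.
From mathcomp Require Import all_boot all_order.
Set Implicit Arguments. Unset Strict Implicit. Unset Printing Implicit Defensive.
Import Order.TTheory.
Local Open Scope order_scope.

(* the basis B = { e_xy : x < y } of the incidence algebra, e_xy identified
   with the pair (x, y) *)
Definition Bas {disp : Order.disp_t} (X : finPOrderType disp) :=
  {p : X * X | p.1 < p.2}.

Definition is_chain {disp : Order.disp_t} {X : finPOrderType disp}
  (A : {set X}) : bool := [forall x in A, forall y in A, x >=< y].

Definition max_chain {disp : Order.disp_t} {X : finPOrderType disp}
  (s : seq X) : Prop :=
  sorted <%O s /\ maxset is_chain [set x in s].

Definition in_Min {disp : Order.disp_t} {X : finPOrderType disp} (x : X) : Prop :=
  forall y : X, ~ (y < x).
Definition in_Max {disp : Order.disp_t} {X : finPOrderType disp} (x : X) : Prop :=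
  forall y : X, ~ (x < y).

Definition connected_poset {disp : Order.disp_t} (X : finPOrderType disp) : Prop :=
  forall x y : X, connect (fun a b => a >=< b) x y.

(* theta increasing on the maximal chain C = u_1 < ... < u_m (0-indexed here):
   there is a maximal chain D : v_1 < ... < v_m with theta(e_{u_i u_j}) = e_{v_i v_j} *)
Definition increasing_on {disp : Order.disp_t} {X : finPOrderType disp}
  (theta : Bas X -> Bas X) (C : seq X) : Prop :=
  exists D : seq X, max_chain D /\ size D = size C /\
    forall (x0 : X) (i j : nat) (b : Bas X), (i < j < size C)%N ->
      val b = (nth x0 C i, nth x0 C j) ->
      val (theta b) = (nth x0 D i, nth x0 D j).

(* theta decreasing on C: theta(e_{u_i u_j}) = e_{v_{m-j+1} v_{m-i+1}}
   (0-indexed: v_{m-1-j}, v_{m-1-i}) *)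
Definition decreasing_on {disp : Order.disp_t} {X : finPOrderType disp}
  (theta : Bas X -> Bas X) (C : seq X) : Prop :=
  exists D : seq X, max_chain D /\ size D = size C /\
    forall (x0 : X) (i j : nat) (b : Bas X), (i < j < size C)%N ->
      val b = (nth x0 C i, nth x0 C j) ->
      val (theta b) = (nth x0 D (size C - 1 - j), nth x0 D (size C - 1 - i)).

Definition in_M {disp : Order.disp_t} {X : finPOrderType disp}
  (theta : Bas X -> Bas X) : Prop :=
  bijective theta /\
  forall C : seq X, max_chain C -> increasing_on theta C \/ decreasing_on theta C.

From HB Require Import structures.
From mathcomp Require Import all_boot all_order.
Import Order.TTheory.

Set Implicit Arguments.
Unset Strict Implicit.
Unset Printing Implicit Defensive.

(* Suppose x is neither minimal nor maximal.  A maximal chain starts at a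
   minimal and ends at a maximal element, so x lies strictly inside both C and
   D: u < x < u' on C and w < x < w' on D, with u, w first and u', w' last.
   For p < q < r, extending {p, q, r} to a maximal chain shows that every
   theta in M(X) glues theta(e_pq) and theta(e_qr) head to tail, in one order
   or the other.  Increasing on C, theta(e_ux) ends where theta(e_xu') starts;
   decreasing on D, theta(e_wx) ends at a maximal and theta(e_xw') starts at a
   minimal element.  Gluing e_ux to e_xw' and e_wx to e_xu' is then only
   possible by closing theta(e_ux), theta(e_xu') into a strict cycle. *)

Local Open Scope order_scope.

Lemma mem_nth0 (T : eqType) (s : seq T) x : x \in s -> nth x s 0 \in s.
Proof. by case: s => // y s _; rewrite mem_head. Qed.

Lemma mem_nth_last (T : eqType) (s : seq T) x :
  x \in s -> nth x s (size s - 1) \in s.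
Proof. by case: s => // y s _; rewrite subn1 mem_nth. Qed.

Section MaximalChains.
Context {disp : Order.disp_t} {X : finPOrderType disp}.
Implicit Types (s : seq X) (x y z : X).

Lemma sorted_le_index s : sorted <%O s ->
  {in s &, forall x y, (index x s <= index y s)%N = (x <= y)}.
Proof.
move=> ss x y xs ys.
by rewrite -(lt_sorted_leq_nth x ss) ?inE ?index_mem ?nth_index.
Qed.

Lemma sorted_lt_index s : sorted <%O s ->
  {in s &, forall x y, (index x s < index y s)%N = (x < y)}.
Proof.
move=> ss x y xs ys.
by rewrite -(lt_sorted_ltn_nth x ss) ?inE ?index_mem ?nth_index.
Qed.

Lemma sorted_is_chain s : sorted <%O s -> is_chain [set x in s].
Proof.
move=> ss; apply/forall_inP => x; rewrite inE => xs.
apply/forall_inP => y; rewrite inE => ys.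
by rewrite /Order.comparable -!(sorted_le_index ss) ?leq_total.
Qed.

Lemma max_chain_exists (A : {set X}) : is_chain A ->
  exists2 s, max_chain s & A \subset [set x in s].
Proof.
move=> chainA; have [M maxM AM] := maxset_exists chainA.
have chainM : is_chain M by case/maxsetP: maxM.
have totM : {in M &, total (<=%O : rel X)}.
  by move=> x y xM yM; move/forall_inP/(_ x xM)/forall_inP: chainM; apply.
have sortM : [set x in sort <=%O (enum M)] = M.
  by apply/setP => x; rewrite inE mem_sort mem_enum.
exists (sort <=%O (enum M)); last by rewrite sortM.
split; last by rewrite sortM.
rewrite lt_sorted_uniq_le sort_uniq enum_uniq /=.
by apply: (sort_sorted_in totM); apply/allP => x; rewrite mem_enum.
Qed.

Lemma max_chain_comparable_mem s z :
  max_chain s -> {in s, forall y, z >=< y} -> z \in s.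
Proof.
case=> _ /maxsetP[chain_s max_s] zs.
have chain_zs : is_chain (z |: [set x in s]).
  apply/forall_inP => x; rewrite !inE => /predU1P[-> | xs];
    apply/forall_inP => y; rewrite !inE => /predU1P[-> | ys].
  - exact: comparablexx.
  - exact: zs.
  - by rewrite comparable_sym zs.
  - by move/forall_inP: chain_s => /(_ x); rewrite inE => /(_ xs)/forall_inP;
      apply; rewrite inE.
have := setU11 z [set x in s].
by rewrite (max_s _ chain_zs (subsetUr _ _)) inE.
Qed.

Lemma lt_sorted_nth0_le s x0 y : sorted <%O s -> y \in s -> nth x0 s 0 <= y.
Proof.
move=> ss ys; have s_gt0 : (0 < size s)%N by case: (s) ys.
by rewrite -(sorted_le_index ss) ?mem_nth ?index_uniq ?lt_sorted_uniq.
Qed.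

Lemma lt_sorted_le_nth_last s x0 y :
  sorted <%O s -> y \in s -> y <= nth x0 s (size s - 1).
Proof.
move=> ss ys; have s_gt0 : (0 < size s)%N by case: (s) ys.
have last_lt : (size s - 1 < size s)%N by rewrite ltn_subrL s_gt0.
rewrite -(sorted_le_index ss) ?mem_nth ?index_uniq ?lt_sorted_uniq //.
by rewrite leq_subRL ?add1n ?index_mem.
Qed.

Lemma max_chain_nth0_Min s x0 : max_chain s -> (0 < size s)%N ->
  in_Min (nth x0 s 0).
Proof.
move=> maxs s_gt0 z z_lt.
have zs : z \in s.
  apply: max_chain_comparable_mem => // y ys.
  exact/lt_comparable/(lt_le_trans z_lt)/lt_sorted_nth0_le/ys/maxs.1.
by have := lt_sorted_nth0_le x0 maxs.1 zs; rewrite lt_geF.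
Qed.

Lemma max_chain_nth_last_Max s x0 : max_chain s -> (0 < size s)%N ->
  in_Max (nth x0 s (size s - 1)).
Proof.
move=> maxs s_gt0 z lt_z.
have zs : z \in s.
  apply: max_chain_comparable_mem => // y ys; rewrite comparable_sym.
  exact/lt_comparable/(le_lt_trans _ lt_z)/lt_sorted_le_nth_last/ys/maxs.1.
by have := lt_sorted_le_nth_last x0 maxs.1 zs; rewrite lt_geF.
Qed.

Lemma max_chain_nth0_lt s x : max_chain s -> x \in s ->
  in_Min x \/ nth x s 0 < x.
Proof.
move=> maxs xs; have s_gt0 : (0 < size s)%N by case: (s) xs.
have [<-|ne] := eqVneq (nth x s 0) x; first by left; apply: max_chain_nth0_Min.
by right; rewrite lt_neqAle ne lt_sorted_nth0_le //; case: maxs.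
Qed.

Lemma max_chain_nth_last_gt s x : max_chain s -> x \in s ->
  in_Max x \/ x < nth x s (size s - 1).
Proof.
move=> maxs xs; have s_gt0 : (0 < size s)%N by case: (s) xs.
have [<-|ne] := eqVneq (nth x s (size s - 1)) x.
  by left; apply: max_chain_nth_last_Max.
by right; rewrite lt_neqAle eq_sym ne lt_sorted_le_nth_last //; case: maxs.
Qed.

End MaximalChains.

Section ChainMaps.
Context {disp : Order.disp_t} {X : finPOrderType disp}.
Variable theta : Bas X -> Bas X.
Implicit Types (E : seq X) (p q r : X) (b : Bas X).

Lemma index_Bas_lt E b p q : sorted <%O E -> p \in E -> q \in E ->
  val b = (p, q) -> (index p E < index q E < size E)%N.
Proof.
move=> sE pE qE e; have := valP b; rewrite e /= => pq.
by rewrite (sorted_lt_index sE) ?pq ?index_mem.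
Qed.

Lemma increasing_onE E : sorted <%O E -> increasing_on theta E ->
  exists F : seq X, forall x0 b p q, p \in E -> q \in E -> val b = (p, q) ->
    val (theta b) = (nth x0 F (index p E), nth x0 F (index q E)).
Proof.
move=> sE [F [_ [_ thetaF]]]; exists F => x0 b p q pE qE e.
by apply: thetaF; [exact: index_Bas_lt e | rewrite !nth_index].
Qed.

Lemma decreasing_onE E : sorted <%O E -> decreasing_on theta E ->
  exists F : seq X, [/\ max_chain F, size F = size E &
    forall x0 b p q, p \in E -> q \in E -> val b = (p, q) ->
    val (theta b) = (nth x0 F (size E - 1 - index q E),
                     nth x0 F (size E - 1 - index p E))].
Proof.
move=> sE [F [maxF [sizeF thetaF]]]; exists F; split=> // x0 b p q pE qE e.
by apply: thetaF; [exact: index_Bas_lt e | rewrite !nth_index].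
Qed.

Lemma increasing_on_glue E b1 b2 p q r :
  sorted <%O E -> increasing_on theta E -> p \in E -> q \in E -> r \in E ->
  val b1 = (p, q) -> val b2 = (q, r) ->
  (val (theta b1)).2 = (val (theta b2)).1.
Proof.
move=> sE incE pE qE rE e1 e2; have [F thetaF] := increasing_onE sE incE.
by rewrite (thetaF p b1 p q) ?(thetaF p b2 q r).
Qed.

Lemma decreasing_on_glue E b1 b2 p q r :
  sorted <%O E -> decreasing_on theta E -> p \in E -> q \in E -> r \in E ->
  val b1 = (p, q) -> val b2 = (q, r) ->
  (val (theta b1)).1 = (val (theta b2)).2.
Proof.
move=> sE decE pE qE rE e1 e2; have [F [_ _ thetaF]] := decreasing_onE sE decE.
by rewrite (thetaF p b1 p q) ?(thetaF p b2 q r).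
Qed.

Lemma decreasing_on_first_Max E b q :
  max_chain E -> decreasing_on theta E -> q \in E ->
  val b = (nth q E 0, q) -> in_Max (val (theta b)).2.
Proof.
move=> [sE _] decE qE e; have E_gt0 : (0 < size E)%N by case: (E) qE.
have [F [maxF sizeF thetaF]] := decreasing_onE sE decE.
rewrite (thetaF q b _ q (mem_nth0 qE)) //= index_uniq ?lt_sorted_uniq //.
by rewrite subn0 -sizeF; apply: max_chain_nth_last_Max; rewrite ?sizeF.
Qed.

Lemma decreasing_on_last_Min E b p :
  max_chain E -> decreasing_on theta E -> p \in E ->
  val b = (p, nth p E (size E - 1)) -> in_Min (val (theta b)).1.
Proof.
move=> [sE _] decE pE e; have E_gt0 : (0 < size E)%N by case: (E) pE.
have [F [maxF sizeF thetaF]] := decreasing_onE sE decE.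
rewrite (thetaF p b p _ pE (mem_nth_last pE)) //= index_uniq ?lt_sorted_uniq //.
  by rewrite subnn; apply: max_chain_nth0_Min; rewrite ?sizeF.
by rewrite ltn_subrL E_gt0.
Qed.

Lemma in_M_glue b1 b2 p q r : in_M theta ->
  val b1 = (p, q) -> val b2 = (q, r) ->
  (val (theta b1)).2 = (val (theta b2)).1 \/
  (val (theta b1)).1 = (val (theta b2)).2.
Proof.
move=> [_ thetaM] e1 e2.
have pq := valP b1; have qr := valP b2; rewrite e1 in pq; rewrite e2 in qr.
have sorted_pqr : sorted <%O [:: p; q; r] by rewrite /= pq qr.
have [E maxE /subsetP pqrE] := max_chain_exists (sorted_is_chain sorted_pqr).
have [pE qE rE] : [/\ p \in E, q \in E & r \in E].
  by split; [move: (pqrE p) | move: (pqrE q) | move: (pqrE r)];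
    rewrite !inE eqxx ?orbT => /(_ isT).
case: (thetaM E maxE) => [incE|decE].
  by left; apply: increasing_on_glue maxE.1 incE pE qE rE e1 e2.
by right; apply: decreasing_on_glue maxE.1 decE pE qE rE e1 e2.
Qed.

End ChainMaps.

Theorem lemma3p4 (disp : Order.disp_t) (X : finPOrderType disp)
  (theta : Bas X -> Bas X) (C D : seq X) (x : X) :
  connected_poset X -> in_M theta ->
  max_chain C -> max_chain D ->
  increasing_on theta C -> decreasing_on theta D ->
  x \in C -> x \in D ->
  in_Min x \/ in_Max x.
Proof.
move=> _ thetaM maxC maxD incC decD xC xD.
have [|u_x] := max_chain_nth0_lt maxC xC; first by left.
have [|x_u'] := max_chain_nth_last_gt maxC xC; first by right.
have [|w_x] := max_chain_nth0_lt maxD xD; first by left.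
have [|x_w'] := max_chain_nth_last_gt maxD xD; first by right.
pose a : Bas X := exist _ (_, x) u_x; pose b : Bas X := exist _ (x, _) x_u'.
pose c : Bas X := exist _ (_, x) w_x; pose d : Bas X := exist _ (x, _) x_w'.
have ab := increasing_on_glue maxC.1 incC (mem_nth0 xC) xC (mem_nth_last xC)
  (erefl (val a)) (erefl (val b)).
have cd := decreasing_on_glue maxD.1 decD (mem_nth0 xD) xD (mem_nth_last xD)
  (erefl (val c)) (erefl (val d)).
have c_Max := decreasing_on_first_Max maxD decD xD (erefl (val c)).
have d_Min := decreasing_on_last_Min maxD decD xD (erefl (val d)).
exfalso; have [ad|da] := in_M_glue thetaM (erefl (val a)) (erefl (val d)).
  by apply: (d_Min (val (theta a)).1); rewrite -ad (valP (theta a)).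
have [cb|bc] := in_M_glue thetaM (erefl (val c)) (erefl (val b)).
  by apply: (c_Max (val (theta b)).2); rewrite cb (valP (theta b)).
have := valP (theta a); rewrite ab => /lt_trans/(_ (valP (theta b))).
by rewrite da -cd bc ltxx.
Qed.
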